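(* Let $E_0,E_1,\dots,E_n$ be $S$-scaled vector spaces, let $\tau\in]0,S[$, and for $i=1,\dots,n$ let $u_i:E_i\to E_{i-1}$ be a $k_i$-bounded $\tau$-morphism. Then $u_1\circ\cdots\circ u_n$ is a $k$-bounded $\tau$-morphism with $k=\sum_{i=1}^n k_i$, and $$N_\tau^k(u_1\cdots u_n)\le n^k\prod_{i=1}^n N_\tau^{k_i}(u_i).$$ Moreover, if all $E_i$ equal a single space $E$ and $u_1=\dots=u_n=u$ is $1$-bounded, then $$\frac{N_\tau^n(u^n)}{n!}\le 3^n N_\tau^1(u)^n.$$
   Context: An $S$-scale of Banach spaces is a decreasing family $(E_s)_{s\in]0,S[}$ of Banach spaces with norms $|\cdot|_s$ such that the inclusions $E_{s+\sigma}\subset E_s$ have norm at most $1$. An $S$-scaled vector space is a topological vector space $E=\bigcup_s E_s$ carrying the direct-limit topology of such a scale. A linear map $u:E\to F$ between $S$-scaled spaces is a $\tau$-morphism ($\tau<S$) if for all $s'\in]0,\tau]$ and $s\in]0,s'[$ one has $u(E_{s'})\subset F_s$ with $u:E_{s'}\to F_s$ continuous. A $\tau$-morphism is $k$-bounded if there is $C>0$ with $|u(x)|_s\le C\sigma^{-k}|x|_{s+\sigma}$ for all $s\in]0,\tau[$, $\sigma\in]0,\tau-s]$, $x\in E_{s+\sigma}$; $N_\tau^k(u)$ denotes the smallest such $C$. *)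

From HB Require Import structures.
From mathcomp Require Import all_boot all_order all_algebra.
From mathcomp Require Import all_classical all_reals all_analysis.
Set Implicit Arguments. Unset Strict Implicit. Unset Printing Implicit Defensive.
Import Order.TTheory GRing.Theory Num.Theory.
Local Open Scope classical_set_scope.
Local Open Scope ring_scope.

(* An S-scaled vector space: ambient vector space E = union of the E_s,
   together with the S-scale of Banach spaces (E_s, |.|_s), s in ]0,S[. *)
Record Sscaled (R : realType) (S : R) := {
  sc_V : lmodType R;
  sc_E : R -> set sc_V;
  sc_norm : R -> sc_V -> R;
  sc_sub0 : forall s, 0 < s < S -> sc_E s 0;
  sc_subL : forall s (a : R) x y, 0 < s < S -> sc_E s x -> sc_E s y ->
              sc_E s (a *: x + y);
  sc_norm_eq0 : forall s x, 0 < s < S -> sc_E s x -> sc_norm s x = 0 -> x = 0;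
  sc_normZ : forall s (a : R) x, 0 < s < S -> sc_E s x ->
              sc_norm s (a *: x) = `|a| * sc_norm s x;
  sc_normD : forall s x y, 0 < s < S -> sc_E s x -> sc_E s y ->
              sc_norm s (x + y) <= sc_norm s x + sc_norm s y;
  sc_complete : forall s (w : nat -> sc_V), 0 < s < S ->
     (forall m, sc_E s (w m)) ->
     (forall e : R, 0 < e -> exists N : nat, forall m p, (N <= m)%N -> (N <= p)%N ->
         sc_norm s (w m - w p) < e) ->
     exists2 l, sc_E s l & forall e : R, 0 < e -> exists N : nat,
         forall m, (N <= m)%N -> sc_norm s (w m - l) < e;
  sc_decr : forall s s' x, 0 < s -> s <= s' -> s' < S -> sc_E s' x -> sc_E s x;
  sc_incl : forall s s' x, 0 < s -> s <= s' -> s' < S -> sc_E s' x ->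
              sc_norm s x <= sc_norm s' x;
  sc_union : forall x, exists s, 0 < s < S /\ sc_E s x
}.

Arguments sc_V {R S} _.
Arguments sc_E {R S} _ _ _.
Arguments sc_norm {R S} _ _ _.

Section Morphisms.
Variables (R : realType) (S : R).

Definition tau_morphism (E F : @Sscaled R S) (tau : R) (u : sc_V E -> sc_V F) :=
  (forall (a : R) x y, u (a *: x + y) = a *: u x + u y) /\
  forall s' s, 0 < s' <= tau -> 0 < s < s' ->
    (forall x, sc_E E s' x -> sc_E F s (u x)) /\
    (forall x, sc_E E s' x -> forall e : R, 0 < e -> exists2 d : R, 0 < d &
        forall y, sc_E E s' y -> sc_norm E s' (y - x) < d ->
          sc_norm F s (u y - u x) < e).

Definition bound_const (E F : @Sscaled R S) (tau k : R) (u : sc_V E -> sc_V F)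
    (C : R) :=
  forall s sigma x, 0 < s < tau -> 0 < sigma <= tau - s -> sc_E E (s + sigma) x ->
    sc_norm F s (u x) <= C * sigma `^ (- k) * sc_norm E (s + sigma) x.

Definition k_bounded (E F : @Sscaled R S) (tau k : R) (u : sc_V E -> sc_V F) :=
  tau_morphism tau u /\ exists2 C : R, 0 < C & bound_const tau k u C.

Definition Nbound (E F : @Sscaled R S) (tau k : R) (u : sc_V E -> sc_V F) : R :=
  inf [set C : R | 0 < C /\ bound_const tau k u C].

Fixpoint compn (E : nat -> @Sscaled R S)
    (u : forall i, sc_V (E i) -> sc_V (E i.-1)) (m : nat) :
    sc_V (E m) -> sc_V (E 0%N) :=
  match m with
  | 0%N => fun x => x
  | m'.+1 => fun x => @compn E u m' (u m'.+1 x)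
  end.
End Morphisms.
Arguments compn {R S E} u m _.

From HB Require Import structures.
From mathcomp Require Import all_boot all_order all_algebra.
From mathcomp Require Import all_classical all_reals all_analysis.
From mathcomp Require Import ring lra.
Import Order.TTheory GRing.Theory Num.Theory.
Local Open Scope ring_scope.

(* To bound the composite from E_(s + sigma) to E_s, split the gap sigma into
   n equal steps and let u_n, ..., u_1 pass through the intermediate scales
   s + sigma, s + (n - 1) sigma / n, ..., s.  The i-th step costs
   N(u_i) (sigma / n)^(-k_i), and the product of these costs is
   n^k sigma^(-k) prod N(u_i).  Continuity of the composite follows from this
   bound by linearity.  For the powers of a 1-bounded u the bound reads
   N(u^n) <= n^n N(u)^n, and n^n / n! <= e^n <= 3^n. *)

Section Scale.
Context {R : realType} {S : R} {E : @Sscaled R S}.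

Lemma sc_norm0 s : 0 < s < S -> sc_norm E s 0 = 0.
Proof. by move=> hs; rewrite -(scale0r 0) sc_normZ ?normr0 ?mul0r //; exact: sc_sub0. Qed.

Lemma sc_subB s x y : 0 < s < S -> sc_E E s x -> sc_E E s y -> sc_E E s (y - x).
Proof. by move=> hs hx hy; rewrite addrC -scaleN1r; apply: sc_subL. Qed.

Lemma sc_norm_ge0 s x : 0 < s < S -> sc_E E s x -> 0 <= sc_norm E s x.
Proof.
move=> hs hx; have hNx : sc_E E s (- x) by rewrite -sub0r; apply: sc_subB => //; exact: sc_sub0.
have := sc_normD hs hx hNx.
by rewrite subrr sc_norm0 // -scaleN1r sc_normZ // normrN normr1 mul1r; lra.
Qed.

End Scale.

Lemma powRVN (R : realType) (a r : R) : 0 <= a -> (a^-1) `^ (- r) = a `^ r.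
Proof. by move=> ha; rewrite -powR_inv1 // -powRrM mulNr mul1r opprK. Qed.

Lemma powR_sum (R : realType) (a : R) (I : Type) (s : seq I) (P : pred I) (f : I -> R) :
  0 < a -> a `^ (\sum_(i <- s | P i) f i) = \prod_(i <- s | P i) a `^ f i.
Proof.
move=> ha; elim: s => [|i s IH]; first by rewrite !big_nil powRr0.
rewrite !big_cons; case: (P i) => //.
by rewrite powRD ?IH //; apply/implyP => _; rewrite gt_eqF.
Qed.

Section Bounds.
Context {R : realType} {S : R} {E F : @Sscaled R S} {tau k : R}.
Context {u : sc_V E -> sc_V F}.
Hypothesis htau : 0 < tau < S.

Lemma sc_norm_ge0_step s sigma x : 0 < s < tau -> 0 < sigma <= tau - s ->
  sc_E E (s + sigma) x -> 0 <= sc_norm E (s + sigma) x.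
Proof.
move: htau => /andP[_ htS] /andP[hs _] /andP[hsig hst]; apply: sc_norm_ge0.
by apply/andP; split; lra.
Qed.

Lemma bound_constW C C' : C <= C' -> bound_const tau k u C -> bound_const tau k u C'.
Proof.
move=> hC hb s sigma x hs hsig hx; apply: (le_trans (hb s sigma x hs hsig hx)).
rewrite -!mulrA ler_wpM2r // mulr_ge0 ?powR_ge0 //; exact: sc_norm_ge0_step.
Qed.

Lemma Nbound_ge0 : 0 <= Nbound tau k u.
Proof.
rewrite /Nbound; set A := (X in inf X).
have [hA|/nonemptyPn ->] := pselect (A !=set0)%classic; last by rewrite inf0.
by apply: lb_le_inf => // C [/ltW].
Qed.

Lemma bound_const_Nbound : (exists2 C, 0 < C & bound_const tau k u C) ->
  bound_const tau k u (Nbound tau k u).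
Proof.
move=> [C0 hC0 hbC0] s sigma x hs hsig hx; rewrite -mulrA.
set b := sigma `^ (- k) * _.
have hb0 : 0 <= b by rewrite mulr_ge0 ?powR_ge0 //; exact: sc_norm_ge0_step.
have [b0|hb] := eqVneq b 0.
  by have := hbC0 s sigma x hs hsig hx; rewrite -mulrA -/b b0 !mulr0.
have {hb hb0}hb : 0 < b by rewrite lt_def hb hb0.
rewrite -ler_pdivrMr //; apply: lb_le_inf; first by exists C0.
by move=> C [_ hbC]; rewrite ler_pdivrMr // mulrA; exact: hbC.
Qed.

Lemma Nbound_le D : 0 <= D -> bound_const tau k u D -> Nbound tau k u <= D.
Proof.
move=> hD hb; apply/ler_addgt0Pr => e he; apply: ge_inf.
  by exists 0 => C [/ltW].
by split; [lra | apply: bound_constW hb; lra].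
Qed.

Lemma tau_morphism_of_bound C :
  (forall (a : R) x y, u (a *: x + y) = a *: u x + u y) ->
  (forall s' s, 0 < s' <= tau -> 0 < s < s' ->
     forall x, sc_E E s' x -> sc_E F s (u x)) ->
  bound_const tau k u C -> tau_morphism tau u.
Proof.
move=> hlin hmap hbC; split=> // s' s hs' hs; split; first exact: hmap.
move=> x hx e he; set A := `|C * (s' - s) `^ (- k)|.
have hA0 : 0 <= A := normr_ge0 _.
have hA : 0 < A + 1 by lra.
exists (e / (A + 1)); first by rewrite divr_gt0.
move=> y hy hyx.
have hS' : 0 < s' < S by move: hs' htau => /andP[? ?] /andP[_ ?]; apply/andP; split; lra.
have hsub : u (y - x) = u y - u x by rewrite addrC -scaleN1r hlin scaleN1r addrC.
have ess : s + (s' - s) = s' by rewrite addrC subrK.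
have hb := hbC s (s' - s) (y - x).
rewrite ess in hb; rewrite -hsub.
have hyx' := sc_subB _ _ _ hS' hx hy.
have hyx0 := sc_norm_ge0 _ _ hS' hyx'.
move: hs hs' => /andP[hs hss'] /andP[_ hs't].
apply: (le_lt_trans (hb _ _ hyx')); [by apply/andP; split; lra.. |].
apply: (le_lt_trans (ler_wpM2r hyx0 (ler_norm _))); rewrite -/A.
have hd : e / (A + 1) * (A + 1) = e by rewrite divfK ?gt_eqF.
nra.
Qed.

End Bounds.

Section Composition.
Context {R : realType} {S : R} {E : nat -> @Sscaled R S}.
Context {u : forall i, sc_V (E i) -> sc_V (E i.-1)} {tau : R} {k C : nat -> R}.
Hypothesis htau : 0 < tau < S.

Lemma compn_linear n :
  (forall i, (1 <= i <= n)%N -> forall (a : R) x y, u i (a *: x + y) = a *: u i x + u i y) ->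
  forall (a : R) x y, compn u n (a *: x + y) = a *: compn u n x + compn u n y.
Proof.
elim: n => [|n IH] hlin a x y //=.
rewrite (hlin n.+1) ?leqnn // IH // => i /andP[hi1 hin] b v w.
by apply: hlin; rewrite hi1 leqW.
Qed.

Lemma compn_mem n : (forall i, (1 <= i <= n)%N -> tau_morphism tau (u i)) ->
  forall s t x, 0 < s < t -> t <= tau -> sc_E (E n) t x -> sc_E (E 0%N) s (compn u n x).
Proof.
have htS : tau < S by case/andP: htau.
elim: n => [|n IH] hmor s t x /andP[hs hst] htt hx /=.
  by apply: (sc_decr hs (ltW hst)) => //; lra.
have hmid : 0 < (s + t) / 2 < t by apply/andP; split; lra.
apply: (IH _ s ((s + t) / 2)); last 2 first.
- lra.
- have [_ hm] := hmor n.+1 (leqnn _).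
  by apply: (hm t _ _ hmid).1 => //; apply/andP; split; lra.
- by move=> i /andP[hi1 hin]; apply: hmor; rewrite hi1 leqW.
- by apply/andP; split; lra.
Qed.

Definition bounded_family n :=
  forall i, (1 <= i <= n)%N ->
    [/\ tau_morphism tau (u i), 0 <= C i & bound_const tau (k i) (u i) (C i)].

Lemma bounded_familyS n : bounded_family n.+1 -> bounded_family n.
Proof. by move=> H i /andP[hi1 hin]; apply: H; rewrite hi1 leqW. Qed.

Lemma compn_norm_le n d s t x : bounded_family n -> 0 < d -> 0 < s ->
  s + n%:R * d <= t -> t <= tau -> sc_E (E n) t x ->
  sc_norm (E 0%N) s (compn u n x) <=
    \prod_(1 <= i < n.+1) (C i * d `^ (- k i)) * sc_norm (E n) t x.
Proof.
have htS : tau < S by case/andP: htau.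
elim: n t x => [|n IH] t x H hd hs hst htt hx /=.
  rewrite big_geq // mul1r; apply: sc_incl => //; lra.
have [[_ hmor] hC hb] := H n.+1 (leqnn _).
have hnd : 0 <= n%:R * d by rewrite mulr_ge0 ?ler0n ?ltW.
have hst' : s + n%:R * d <= t - d by move: hst; rewrite -natr1 mulrDl mul1r; lra.
have hux : sc_E (E n) (t - d) (u n.+1 x).
  by apply: (hmor t (t - d) _ _).1 => //; apply/andP; split; lra.
apply: (le_trans (IH (t - d) (u n.+1 x) (bounded_familyS _ H) hd hs hst' _ hux)); first lra.
rewrite [X in _ <= X * _]big_nat_recr //= -mulrA ler_wpM2l //.
  rewrite big_nat_cond prodr_ge0 // => i /andP[/andP[hi1 hin] _].
  have [_ hCi _] := H i (ltac:(by rewrite hi1 ltnW)).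
  by rewrite mulr_ge0 ?powR_ge0.
have := hb (t - d) d x; rewrite subrK; apply => //; apply/andP; split; lra.
Qed.

Lemma compn_bound_const n : bounded_family n ->
  bound_const tau (\sum_(1 <= i < n.+1) k i) (compn u n)
    (n%:R `^ (\sum_(1 <= i < n.+1) k i) * \prod_(1 <= i < n.+1) C i).
Proof.
have htS : tau < S by case/andP: htau.
move=> H s sigma x /andP[hs hst] /andP[hsig hsigt].
case: n => [|n] in H x *.
  rewrite !big_geq // oppr0 !powRr0 !mul1r /=; apply: sc_incl; lra.
set K := \sum_(1 <= i < n.+2) k i; pose d := sigma / n.+1%:R.
have hn : 0 < n.+1%:R :> R by rewrite ltr0n.
have hd : 0 < d by rewrite divr_gt0.
have hnd : n.+1%:R * d = sigma by rewrite mulrC divfK ?gt_eqF.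
move=> hx; apply: (le_trans (compn_norm_le _ _ _ _ _ H hd hs _ _ hx));
  [by rewrite lerD2l -hnd | lra |].
rewrite big_split /= -powR_sum // sumrN -/K (powRM _ (ltW hsig)) ?invr_ge0 ?ler0n // powRVN ?ler0n //.
by rewrite [_ `^ (- K) * _]mulrC mulrA [_ * _ `^ K]mulrC.
Qed.

End Composition.

Section KBounded.
Context {R : realType} {S : R} {E : nat -> @Sscaled R S}.
Context {u : forall i, sc_V (E i) -> sc_V (E i.-1)} {tau : R} {k : nat -> R}.
Hypothesis htau : 0 < tau < S.
Variable n : nat.
Hypothesis hu : forall i, (1 <= i <= n)%N -> k_bounded tau (k i) (u i).

Lemma bounded_family_Nbound :
  bounded_family (u := u) (tau := tau) (k := k) (C := fun i => Nbound tau (k i) (u i)) n.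
Proof.
move=> i hi; have [hmor hex] := hu i hi.
by split; [| exact: Nbound_ge0 | exact: bound_const_Nbound].
Qed.

Lemma compn_bound_const_Nbound :
  bound_const tau (\sum_(1 <= i < n.+1) k i) (compn u n)
    (n%:R `^ (\sum_(1 <= i < n.+1) k i) * \prod_(1 <= i < n.+1) Nbound tau (k i) (u i)).
Proof. exact: compn_bound_const htau n bounded_family_Nbound. Qed.

Lemma Nbound_compn_bound_ge0 :
  0 <= n%:R `^ (\sum_(1 <= i < n.+1) k i) * \prod_(1 <= i < n.+1) Nbound tau (k i) (u i).
Proof. by rewrite mulr_ge0 ?powR_ge0 // prodr_ge0 // => i _; exact: Nbound_ge0. Qed.

Lemma compn_k_bounded : k_bounded tau (\sum_(1 <= i < n.+1) k i) (compn u n).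
Proof.
have := Nbound_compn_bound_ge0; have := compn_bound_const_Nbound.
set D := _ * _ => hb hD.
split; last by exists (D + 1); [lra | apply: bound_constW htau _ _ _ hb; lra].
apply: tau_morphism_of_bound htau _ _ _ hb.
  exact: compn_linear n (fun i hi => (hu i hi).1.1).
move=> s' s /andP[_ hs't] hs x hx.
exact: compn_mem htau n (fun i hi => (hu i hi).1) s s' x hs hs't hx.
Qed.

Lemma Nbound_compn :
  Nbound tau (\sum_(1 <= i < n.+1) k i) (compn u n) <=
    n%:R `^ (\sum_(1 <= i < n.+1) k i) * \prod_(1 <= i < n.+1) Nbound tau (k i) (u i).
Proof. exact: Nbound_le htau _ Nbound_compn_bound_ge0 compn_bound_const_Nbound. Qed.

End KBounded.

Section Iteration.
Context {R : realType} {S : R} {E : @Sscaled R S} {u : sc_V E -> sc_V E}.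

Lemma compn_const n :
  compn (E := fun=> E) (fun=> u) n = iter n u.
Proof. by apply: funext => x; elim: n x => //= n IH x; rewrite IH -iterSr. Qed.

Lemma Nbound_iter tau n : 0 < tau < S -> k_bounded tau 1 u ->
  Nbound tau n%:R (iter n u) <= n%:R ^+ n * Nbound tau 1 u ^+ n.
Proof.
move=> htau hu.
have := Nbound_compn (u := fun=> u) (k := fun=> 1) htau n (fun i _ => hu).
by rewrite compn_const sumr_const_nat prodr_const_nat subn1 powR_mulrn ?ler0n.
Qed.

End Iteration.

Section Factorial.
Context {R : realType}.

Lemma expR1_le3 : expR (1 : R) <= 3.
Proof.
(* e = expR (1/6) ^ 6 <= (6/5) ^ 6 < 3, from 5/6 <= expR (- 1/6). *)
have h6 : expR (1 : R) = expR (6^-1) ^+ 6 by rewrite -expRM_natl mulfV ?pnatr_eq0.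
have hpos : 0 < expR (6^-1 : R) := expR_gt0 _.
have h56 : 5 / 6 <= expR (- 6^-1 : R) by have := expR_ge1Dx (- 6^-1 : R); lra.
have h65 : expR (6^-1 : R) <= 6 / 5.
  rewrite expRN in h56; move: h56 (mulfV (lt0r_neq0 hpos)).
  by move: (expR _) hpos => y; move: (y^-1) => z; nra.
rewrite h6; apply: (le_trans (lerXn2r 6 _ _ h65)); rewrite ?nnegrE ?ltW //; lra.
Qed.

Lemma exprnn_fact_le3 n : (n%:R : R) ^+ n / n`!%:R <= 3 ^+ n.
Proof.
case: n => [|n]; first by rewrite !expr0 fact0 divr1.
have := @expR_ge1Dxn R n.+1%:R n (ler0n _ _).
rewrite -[X in expR X]mulr1 expRM_natl => h.
have : expR (1 : R) ^+ n.+1 <= 3 ^+ n.+1.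
  by apply: lerXn2r; rewrite ?nnegrE ?expR_ge0 ?expR1_le3.
lra.
Qed.

End Factorial.

Theorem proposition2 (R : realType) (S : R) :
  (forall (E : nat -> @Sscaled R S) (n : nat) (tau : R) (k : nat -> R)
          (u : forall i, sc_V (E i) -> sc_V (E i.-1)),
      0 < tau < S ->
      (forall i, (1 <= i <= n)%N -> k_bounded tau (k i) (u i)) ->
      k_bounded tau (\sum_(1 <= i < n.+1) k i) (compn u n) /\
      Nbound tau (\sum_(1 <= i < n.+1) k i) (compn u n)
        <= n%:R `^ (\sum_(1 <= i < n.+1) k i) *
           \prod_(1 <= i < n.+1) Nbound tau (k i) (u i)) /\
  (forall (E : @Sscaled R S) (n : nat) (tau : R) (u : sc_V E -> sc_V E),
      0 < tau < S ->
      k_bounded tau 1 u ->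
      Nbound tau n%:R (iter n u) / n`!%:R <= 3 ^+ n * Nbound tau 1 u ^+ n).
Proof.
split=> [E n tau k u htau hu | E n tau u htau hu].
  by split; [exact: compn_k_bounded | exact: Nbound_compn].
have hN0 : 0 <= Nbound tau 1 u ^+ n by rewrite exprn_ge0 // Nbound_ge0.
apply: (le_trans (ler_wpM2r _ (Nbound_iter _ n htau hu))); first by rewrite invr_ge0.
by rewrite mulrAC ler_wpM2r // exprnn_fact_le3.
Qed.
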